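(* Let $a=\pi/8$ and let $(C_4,g_c)$ be the quotient of the singular torus $(T,g_c)$ (defined below) by the cyclic group generated by the isometry $\tau$ induced by $(x,y,z)\mapsto(-y,x,z+\pi/2)$. Then the systole of $(C_4,g_c)$ equals $\pi/2$ and $$\frac{\mathrm{Sys}(C_4,g_c)^3}{\mathrm{Vol}(C_4,g_c)}>1.$$
   Context: $\Delta\subset\mathbb{R}^2$ is the square lattice generated by $(2a,0)$ and $(0,2a)$. On $\mathbb{R}^3$ with coordinates $(x,y,z)$, $h=dx^2+dy^2+\cos^2\!\big(\mathrm{dist}((x,y),\Delta)\big)\,dz^2$ is a continuous Riemannian metric ($\mathrm{dist}$ Euclidean in $\mathbb{R}^2$). $(T,g_c)$ is the quotient of $(\mathbb{R}^3,h)$ by the translations $(x,y,z)\mapsto(x+4a,y,z)$, $(x,y,z)\mapsto(x,y+4a,z)$, $(x,y,z)\mapsto(x,y,z+2\pi)$. $\tau$ is a fixed-point-free isometry of order $4$ of $(T,g_c)$ and the quotient is homeomorphic to the orientable Bieberbach manifold of type $C_4$ (holonomy $\mathbb{Z}_4$). $\mathrm{Sys}$ is the infimum of lengths $\int (h(\gamma',\gamma'))^{1/2}dt$ of non-contractible piecewise smooth closed curves and $\mathrm{Vol}$ the Riemannian volume. *)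

From Stdlib Require Import Reals Lra ZArith.
From Coquelicot Require Import Coquelicot.
Open Scope R_scope.

Definition pt : Type := (R * R * R)%type.

Definition distDelta (a x y : R) : R :=
  real (Glb_Rbar (fun d => exists i j : Z,
     d = sqrt ((x - 2 * a * IZR i) ^ 2 + (y - 2 * a * IZR j) ^ 2))).

Definition h_speed2 (a x y dx dy dz : R) : R :=
  dx ^ 2 + dy ^ 2 + (cos (distDelta a x y)) ^ 2 * dz ^ 2.

(* Deck group Gamma of R^3 -> C_4 = (R^3/translations)/<tau>, generated by the
   three translations and the lift of tau. *)
Definition tx (a : R) (p : pt) : pt := let '(x, y, z) := p in (x + 4 * a, y, z).
Definition txi (a : R) (p : pt) : pt := let '(x, y, z) := p in (x - 4 * a, y, z).
Definition ty (a : R) (p : pt) : pt := let '(x, y, z) := p in (x, y + 4 * a, z).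
Definition tyi (a : R) (p : pt) : pt := let '(x, y, z) := p in (x, y - 4 * a, z).
Definition tz (p : pt) : pt := let '(x, y, z) := p in (x, y, z + 2 * PI).
Definition tzi (p : pt) : pt := let '(x, y, z) := p in (x, y, z - 2 * PI).
Definition tau (p : pt) : pt := let '(x, y, z) := p in (- y, x, z + PI / 2).
Definition taui (p : pt) : pt := let '(x, y, z) := p in (y, - x, z - PI / 2).

Definition generator (a : R) (s : pt -> pt) : Prop :=
  s = tx a \/ s = txi a \/ s = ty a \/ s = tyi a \/
  s = tz \/ s = tzi \/ s = tau \/ s = taui.

Inductive in_Gamma (a : R) : (pt -> pt) -> Prop :=
  | Gamma_id : in_Gamma a (fun p => p)
  | Gamma_step : forall f s, in_Gamma a f -> generator a s ->
      in_Gamma a (fun p => s (f p)).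

Definition C1_on (f : R -> R) (s t : R) : Prop :=
  exists g : R -> R,
    (forall u, s <= u <= t -> g u = f u) /\
    (forall u, ex_derive g u) /\ (forall u, continuous (Derive g) u).

Definition pw_smooth (cx cy cz : R -> R) : Prop :=
  exists (n : nat) (p : nat -> R),
    p 0%nat = 0 /\ p n = 1 /\
    (forall i, (i < n)%nat -> p i < p (S i)) /\
    (forall i, (i < n)%nat ->
       C1_on cx (p i) (p (S i)) /\ C1_on cy (p i) (p (S i)) /\
       C1_on cz (p i) (p (S i))).

Definition h_length (a : R) (cx cy cz : R -> R) : R :=
  RInt (fun u => sqrt (h_speed2 a (cx u) (cy u)
                         (Derive cx u) (Derive cy u) (Derive cz u))) 0 1.

(* Piecewise smooth non-contractible closed curves of C_4 = R^3/Gamma, given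
   by their lifts to the universal cover R^3: the lift ends at g(start) for a
   non-identity deck transformation g. *)
Definition noncontractible_loop (a : R) (cx cy cz : R -> R) : Prop :=
  pw_smooth cx cy cz /\
  exists g : pt -> pt, in_Gamma a g /\ g <> (fun p => p) /\
    (cx 1, cy 1, cz 1) = g (cx 0, cy 0, cz 0).

Definition Sys (a : R) : Rbar :=
  Glb_Rbar (fun L => exists cx cy cz,
     noncontractible_loop a cx cy cz /\ L = h_length a cx cy cz).

(* Riemannian volume of C_4: integral of sqrt(det h) over the fundamental
   domain [0,4a] x [0,4a] x [0,pi/2] of Gamma. *)
Definition Vol (a : R) : R :=
  RInt (fun x => RInt (fun y => RInt (fun z =>
     sqrt ((cos (distDelta a x y)) ^ 2)) 0 (PI / 2)) 0 (4 * a)) 0 (4 * a).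

From Stdlib Require Import Reals Lra Lia ZArith FunctionalExtensionality.
From Coquelicot Require Import Coquelicot.
Open Scope R_scope.

(* Every deck transformation of C_4 is a screw motion: [n] quarter turns about a
   vertical axis, lifted by [n PI/2], followed by a horizontal translation in
   [4a Z^2] (here [4a = PI/2]).  Since [h] dominates the Euclidean metric
   horizontally and [cos(dist) >= cos(PI/4) > 1/2], a loop realising a translation,
   or a lift by at least [PI], has length [>= PI/2] (calibrate by linear functions).
   An odd screw motion rotates by [+-PI/2] about a lattice point [c].  A loop that
   starts far from [c] or leaves the disc of radius [3 PI/4] about [c] is again
   long horizontally.  Inside that disc [cos(dist((x,y),Delta)) >= |cos r|],
   [r = |(x,y) - c|], so [(x,y,z) |-> (cos r cos z, cos r sin z, sin r ((x,y) - c)/r)] is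
   1-Lipschitz into the unit 3-sphere, and it maps the endpoints of the loop to
   orthogonal vectors, at spherical distance [PI/2].  The vertical segment over a
   lattice point closed up by [tau] has length exactly [PI/2].  Finally
   [Vol = PI/2 * \int\int cos(dist) < (PI/2)^3], as [cos(dist) < 1] off the lattice. *)

Lemma sqrt_le_of_le_sq (A B : R) : 0 <= B -> A <= B * B -> sqrt A <= B.
Proof.
  intros HB HA. rewrite <- (sqrt_square B) by lra.
  destruct (Rle_lt_dec 0 A).
  - apply sqrt_le_1_alt; lra.
  - rewrite sqrt_neg_0 by lra. apply sqrt_pos.
Qed.

Lemma Rabs_le_sqrt_sum_sq (u v : R) : Rabs u <= sqrt (u ^ 2 + v ^ 2).
Proof. rewrite <- sqrt_Rsqr_abs. apply sqrt_le_1_alt. unfold Rsqr. nra. Qed.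

Lemma sqrt_sum_sq_le_Rabs (u v : R) : sqrt (u ^ 2 + v ^ 2) <= Rabs u + Rabs v.
Proof.
  assert (Hu : u ^ 2 = Rabs u * Rabs u) by (rewrite <- Rabs_mult, Rabs_right; [ring | nra]).
  assert (Hv : v ^ 2 = Rabs v * Rabs v) by (rewrite <- Rabs_mult, Rabs_right; [ring | nra]).
  pose proof (Rabs_pos u); pose proof (Rabs_pos v).
  apply sqrt_le_of_le_sq; nra.
Qed.

Lemma Cauchy_Schwarz_2 (e1 e2 X Y : R) :
  e1 ^ 2 + e2 ^ 2 <= 1 -> e1 * X + e2 * Y <= sqrt (X ^ 2 + Y ^ 2).
Proof.
  intro He. destruct (Rle_lt_dec (e1 * X + e2 * Y) 0).
  { pose proof (sqrt_pos (X ^ 2 + Y ^ 2)); lra. }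
  rewrite <- (sqrt_square (e1 * X + e2 * Y)) by lra. apply sqrt_le_1_alt.
  pose proof (pow2_ge_0 (e1 * Y - e2 * X)). pose proof (pow2_ge_0 X). pose proof (pow2_ge_0 Y).
  nra.
Qed.

Lemma Cauchy_Schwarz_4 (a1 a2 a3 a4 b1 b2 b3 b4 : R) :
  (a1 * b1 + a2 * b2 + a3 * b3 + a4 * b4) ^ 2
  <= (a1 ^ 2 + a2 ^ 2 + a3 ^ 2 + a4 ^ 2) * (b1 ^ 2 + b2 ^ 2 + b3 ^ 2 + b4 ^ 2).
Proof.
  assert (E : (a1^2+a2^2+a3^2+a4^2) * (b1^2+b2^2+b3^2+b4^2) - (a1*b1 + a2*b2 + a3*b3 + a4*b4) ^ 2 =
    (a1*b2-a2*b1)^2 + (a1*b3-a3*b1)^2 + (a1*b4-a4*b1)^2 + (a2*b3-a3*b2)^2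
    + (a2*b4-a4*b2)^2 + (a3*b4-a4*b3)^2) by ring.
  pose proof (pow2_ge_0 (a1*b2-a2*b1)). pose proof (pow2_ge_0 (a1*b3-a3*b1)).
  pose proof (pow2_ge_0 (a1*b4-a4*b1)). pose proof (pow2_ge_0 (a2*b3-a3*b2)).
  pose proof (pow2_ge_0 (a2*b4-a4*b2)). pose proof (pow2_ge_0 (a3*b4-a4*b3)). lra.
Qed.

Lemma sqrt_sum_sq_triangle (u1 u2 v1 v2 : R) :
  sqrt ((u1 + v1) ^ 2 + (u2 + v2) ^ 2) <= sqrt (u1 ^ 2 + u2 ^ 2) + sqrt (v1 ^ 2 + v2 ^ 2).
Proof.
  assert (Hu := sqrt_sqrt (u1 ^ 2 + u2 ^ 2) ltac:(nra)).
  assert (Hv := sqrt_sqrt (v1 ^ 2 + v2 ^ 2) ltac:(nra)).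
  assert (HP : 0 <= sqrt (u1 ^ 2 + u2 ^ 2) * sqrt (v1 ^ 2 + v2 ^ 2))
    by (apply Rmult_le_pos; apply sqrt_pos).
  assert (Hdot : u1 * v1 + u2 * v2 <= sqrt (u1 ^ 2 + u2 ^ 2) * sqrt (v1 ^ 2 + v2 ^ 2)).
  { destruct (Rle_lt_dec (u1 * v1 + u2 * v2) 0); [lra |].
    rewrite <- sqrt_mult, <- (sqrt_square (u1 * v1 + u2 * v2)) by nra.
    apply sqrt_le_1_alt. pose proof (pow2_ge_0 (u1 * v2 - u2 * v1)). nra. }
  apply sqrt_le_of_le_sq; [pose proof (sqrt_pos (u1 ^ 2 + u2 ^ 2)); pose proof (sqrt_pos (v1 ^ 2 + v2 ^ 2)); lra | nra].
Qed.

Lemma cos_decreasing (x y : R) : 0 <= x -> x <= y -> y <= PI -> cos y <= cos x.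
Proof.
  intros. destruct (Req_dec x y) as [-> | Hxy]; [lra |].
  left. apply cos_decreasing_1; lra.
Qed.

Lemma cos_Lipschitz (u v : R) : Rabs (cos u - cos v) <= Rabs (u - v).
Proof.
  destruct (MVT_gen cos v u (fun x => - sin x)) as [c [_ Hc]].
  - intros; apply is_derive_cos.
  - intros x _. apply continuity_cos.
  - rewrite Hc, Rabs_mult, Rabs_Ropp. rewrite <- (Rmult_1_l (Rabs (u - v))) at 2.
    apply Rmult_le_compat_r; [apply Rabs_pos |]. apply Rabs_le, SIN_bound.
Qed.

Lemma continuous_of_Lipschitz (f : R -> R) (x0 K : R) : 0 <= K ->
  (forall x, Rabs (f x - f x0) <= K * Rabs (x - x0)) -> continuous f x0.
Proof.
  intros HK H. apply filterlim_locally. intro eps.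
  assert (He : 0 < eps / (K + 1)) by (apply Rdiv_lt_0_compat; [apply cond_pos | lra]).
  exists (mkposreal _ He). intros x Hx.
  change (Rabs (x - x0) < eps / (K + 1)) in Hx. change (Rabs (f x - f x0) < eps).
  assert (K * Rabs (x - x0) <= K * (eps / (K + 1))) by (apply Rmult_le_compat_l; lra).
  assert (K * (eps / (K + 1)) < eps).
  { pose proof (cond_pos eps). apply (Rmult_lt_reg_r (K + 1)); [lra |]. field_simplify; lra. }
  specialize (H x). lra.
Qed.

(** * Distance to the lattice *)

Section LatticeDistance.
Variable a : R.

Let lattice_dists (x y : R) : R -> Prop := fun d => exists i j : Z,
  d = sqrt ((x - 2 * a * IZR i) ^ 2 + (y - 2 * a * IZR j) ^ 2).

Lemma distDelta_glb (x y : R) : Glb_Rbar (lattice_dists x y) = Finite (distDelta a x y).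
Proof.
  unfold distDelta. fold (lattice_dists x y).
  destruct (Glb_Rbar_correct (lattice_dists x y)) as [Hlb Hglb].
  destruct (Glb_Rbar (lattice_dists x y)); simpl; auto; exfalso.
  - apply (Hlb (sqrt ((x - 2 * a * IZR 0) ^ 2 + (y - 2 * a * IZR 0) ^ 2))).
    exists 0%Z, 0%Z. reflexivity.
  - assert (H0 : Rbar_le (Finite 0) m_infty).
    { apply Hglb. intros z [i [j ->]]. apply sqrt_pos. }
    exact H0.
Qed.

Lemma distDelta_le (x y : R) (i j : Z) :
  distDelta a x y <= sqrt ((x - 2 * a * IZR i) ^ 2 + (y - 2 * a * IZR j) ^ 2).
Proof.
  destruct (Glb_Rbar_correct (lattice_dists x y)) as [Hlb _].
  rewrite distDelta_glb in Hlb. apply (Hlb _). exists i, j. reflexivity.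
Qed.

Lemma distDelta_ge (x y m : R) :
  (forall i j : Z, m <= sqrt ((x - 2 * a * IZR i) ^ 2 + (y - 2 * a * IZR j) ^ 2)) ->
  m <= distDelta a x y.
Proof.
  intro H. destruct (Glb_Rbar_correct (lattice_dists x y)) as [_ Hglb].
  rewrite distDelta_glb in Hglb. apply (Hglb (Finite m)). intros z [i [j ->]]. apply H.
Qed.

Lemma distDelta_nonneg (x y : R) : 0 <= distDelta a x y.
Proof. apply distDelta_ge. intros; apply sqrt_pos. Qed.

Lemma distDelta_origin : distDelta a 0 0 = 0.
Proof.
  apply Rle_antisym; [| apply distDelta_nonneg].
  eapply Rle_trans; [apply (distDelta_le 0 0 0%Z 0%Z) |].
  replace ((0 - 2 * a * IZR 0) ^ 2 + (0 - 2 * a * IZR 0) ^ 2) with 0 by (simpl; ring).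
  rewrite sqrt_0; lra.
Qed.

Lemma distDelta_Lipschitz (x y x' y' : R) :
  Rabs (distDelta a x y - distDelta a x' y') <= sqrt ((x - x') ^ 2 + (y - y') ^ 2).
Proof.
  assert (Htri : forall x y x' y',
    distDelta a x y <= distDelta a x' y' + sqrt ((x - x') ^ 2 + (y - y') ^ 2)).
  { intros p q p' q'.
    enough (distDelta a p q - sqrt ((p - p') ^ 2 + (q - q') ^ 2) <= distDelta a p' q') by lra.
    apply distDelta_ge. intros i j.
    pose proof (distDelta_le p q i j).
    pose proof (sqrt_sum_sq_triangle (p - p') (q - q') (p' - 2 * a * IZR i) (q' - 2 * a * IZR j)).
    replace (p - p' + (p' - 2 * a * IZR i)) with (p - 2 * a * IZR i) in * by ring.
    replace (q - q' + (q' - 2 * a * IZR j)) with (q - 2 * a * IZR j) in * by ring.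
    lra. }
  pose proof (Htri x y x' y'). pose proof (Htri x' y' x y).
  replace ((x' - x) ^ 2 + (y' - y) ^ 2) with ((x - x') ^ 2 + (y - y') ^ 2) in * by ring.
  apply Rabs_le. lra.
Qed.

Lemma continuous_distDelta_comp (gx gy : R -> R) (u : R) :
  continuous gx u -> continuous gy u -> continuous (fun v => distDelta a (gx v) (gy v)) u.
Proof.
  intros Hx Hy. apply filterlim_locally. intro eps.
  assert (He : 0 < eps / 2) by (pose proof (cond_pos eps); lra).
  pose proof (proj1 (filterlim_locally gx (gx u)) Hx (mkposreal _ He)) as Lx.
  pose proof (proj1 (filterlim_locally gy (gy u)) Hy (mkposreal _ He)) as Ly.
  generalize (filter_and _ _ Lx Ly). apply filter_imp. intros v [Bx By].
  change (Rabs (gx v - gx u) < eps / 2) in Bx.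
  change (Rabs (gy v - gy u) < eps / 2) in By.
  change (Rabs (distDelta a (gx v) (gy v) - distDelta a (gx u) (gy u)) < eps).
  eapply Rle_lt_trans; [apply distDelta_Lipschitz |].
  eapply Rle_lt_trans; [apply sqrt_sum_sq_le_Rabs | lra].
Qed.

Hypothesis a_pos : 0 < a.

Lemma exists_near_lattice_coord (x : R) : exists i : Z, Rabs (x - 2 * a * IZR i) <= a.
Proof.
  destruct (archimed (x / (2 * a) - 1 / 2)) as [H1 H2].
  exists (up (x / (2 * a) - 1 / 2)).
  set (k := IZR (up (x / (2 * a) - 1 / 2))) in *.
  assert (Hx : x = 2 * a * (x / (2 * a))) by (field; lra).
  apply Rabs_le. split; nra.
Qed.

Lemma distDelta_le_2a (x y : R) : distDelta a x y <= 2 * a.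
Proof.
  destruct (exists_near_lattice_coord x) as [i Hi].
  destruct (exists_near_lattice_coord y) as [j Hj].
  eapply Rle_trans; [apply (distDelta_le x y i j) |].
  eapply Rle_trans; [apply sqrt_sum_sq_le_Rabs | lra].
Qed.

Lemma distDelta_ge_on_strip (x y : R) : a / 2 <= x <= 3 * a / 2 -> a / 2 <= distDelta a x y.
Proof.
  intro Hx. apply distDelta_ge. intros i j.
  eapply Rle_trans; [| apply Rabs_le_sqrt_sum_sq].
  destruct (Z_le_gt_dec i 0) as [Hi | Hi].
  - apply IZR_le in Hi. rewrite Rabs_right; nra.
  - assert (1 <= IZR i) by (apply IZR_le; lia). rewrite Rabs_left1; nra.
Qed.

End LatticeDistance.

Lemma cos_distDelta_ge (x y : R) : cos (PI / 4) <= cos (distDelta (PI / 8) x y).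
Proof.
  pose proof PI_RGT_0.
  pose proof (distDelta_le_2a (PI / 8) ltac:(lra) x y).
  apply cos_decreasing; [apply distDelta_nonneg | lra | lra].
Qed.

Lemma cos_PI4_gt_half : 1 / 2 < cos (PI / 4).
Proof.
  rewrite cos_PI4.
  assert (0 < sqrt 2) by (apply sqrt_lt_R0; lra).
  assert (sqrt 2 * sqrt 2 = 2) by (apply sqrt_sqrt; lra).
  apply (Rmult_lt_reg_r (sqrt 2)); [lra |]. field_simplify; nra.
Qed.

(** * Volume *)

Lemma ex_RInt_continuous_R (f : R -> R) (u v : R) : (forall z, continuous f z) -> ex_RInt f u v.
Proof. intro H. apply (ex_RInt_continuous (V := R_CompleteNormedModule)). auto. Qed.

Lemma RInt_const_R (c u v : R) : RInt (fun _ => c) u v = (v - u) * c.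
Proof. rewrite RInt_const. reflexivity. Qed.

Definition vol_density (x y : R) : R := Rabs (cos (distDelta (PI / 8) x y)).

Definition vol_slice (x : R) : R := RInt (vol_density x) 0 (PI / 2).

Lemma vol_density_Lipschitz (x y x' y' : R) :
  Rabs (vol_density x y - vol_density x' y') <= sqrt ((x - x') ^ 2 + (y - y') ^ 2).
Proof.
  eapply Rle_trans; [apply Rabs_triang_inv2 |].
  eapply Rle_trans; [apply cos_Lipschitz | apply distDelta_Lipschitz].
Qed.

Lemma vol_density_Lipschitz_y (x y y' : R) :
  Rabs (vol_density x y - vol_density x y') <= Rabs (y - y').
Proof.
  eapply Rle_trans; [apply vol_density_Lipschitz |].
  replace ((x - x) ^ 2 + (y - y') ^ 2) with ((y - y') ^ 2 + 0 ^ 2) by ring.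
  eapply Rle_trans; [apply sqrt_sum_sq_le_Rabs | rewrite Rabs_R0; lra].
Qed.

Lemma ex_RInt_vol_density (x u v : R) : ex_RInt (vol_density x) u v.
Proof.
  apply ex_RInt_continuous_R. intro y0.
  apply (continuous_of_Lipschitz _ _ 1); [lra |]. intro y.
  rewrite Rmult_1_l. apply vol_density_Lipschitz_y.
Qed.

Lemma vol_density_bounds (x y : R) : cos (PI / 4) <= vol_density x y <= 1.
Proof.
  unfold vol_density. pose proof (cos_distDelta_ge x y). pose proof cos_PI4_gt_half.
  rewrite Rabs_right by lra. split; [lra | apply COS_bound].
Qed.

Lemma vol_density_on_strip (x y : R) :
  PI / 16 <= x <= 3 * PI / 16 -> vol_density x y <= cos (PI / 16).
Proof.
  intro Hx. pose proof PI_RGT_0.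
  unfold vol_density. pose proof (cos_distDelta_ge x y). pose proof cos_PI4_gt_half.
  rewrite Rabs_right by lra.
  pose proof (distDelta_ge_on_strip (PI / 8) ltac:(lra) x y ltac:(lra)).
  pose proof (distDelta_le_2a (PI / 8) ltac:(lra) x y).
  apply cos_decreasing; lra.
Qed.

Lemma vol_slice_le_const (x c : R) : (forall y, vol_density x y <= c) -> vol_slice x <= PI / 2 * c.
Proof.
  intro H. pose proof PI_RGT_0. unfold vol_slice.
  replace (PI / 2 * c) with (RInt (fun _ => c) 0 (PI / 2)) by (rewrite RInt_const_R; lra).
  apply RInt_le; [lra | apply ex_RInt_vol_density | apply ex_RInt_const | auto].
Qed.

Lemma vol_slice_ge (x : R) : PI / 2 * cos (PI / 4) <= vol_slice x.
Proof.
  pose proof PI_RGT_0. unfold vol_slice.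
  replace (PI / 2 * cos (PI / 4)) with (RInt (fun _ => cos (PI / 4)) 0 (PI / 2))
    by (rewrite RInt_const_R; lra).
  apply RInt_le; [lra | apply ex_RInt_const | apply ex_RInt_vol_density |].
  intros; apply vol_density_bounds.
Qed.

Lemma ex_RInt_vol_slice (u v : R) : ex_RInt vol_slice u v.
Proof.
  pose proof PI_RGT_0.
  apply ex_RInt_continuous_R. intro x0.
  apply (continuous_of_Lipschitz _ _ (PI / 2)); [lra |]. intro x.
  unfold vol_slice. rewrite <- (RInt_minus (vol_density x) (vol_density x0))
    by apply ex_RInt_vol_density.
  replace (PI / 2 * Rabs (x - x0)) with ((PI / 2 - 0) * Rabs (x - x0)) by ring.
  apply abs_RInt_le_const; [lra | apply ex_RInt_minus; apply ex_RInt_vol_density |].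
  intros y _. eapply Rle_trans; [apply vol_density_Lipschitz |].
  replace ((x - x0) ^ 2 + (y - y) ^ 2) with ((x - x0) ^ 2 + 0 ^ 2) by ring.
  eapply Rle_trans; [apply sqrt_sum_sq_le_Rabs | rewrite Rabs_R0; lra].
Qed.

Lemma Vol_eq : Vol (PI / 8) = PI / 2 * RInt vol_slice 0 (PI / 2).
Proof.
  unfold Vol. replace (4 * (PI / 8)) with (PI / 2) by field.
  change (PI / 2 * RInt vol_slice 0 (PI / 2)) with (scal (PI / 2) (RInt vol_slice 0 (PI / 2))).
  rewrite <- RInt_scal by apply ex_RInt_vol_slice.
  apply RInt_ext. intros x _. unfold vol_slice.
  rewrite <- RInt_scal by apply ex_RInt_vol_density.
  apply RInt_ext. intros y _.
  rewrite RInt_const_R, <- Rsqr_pow2, sqrt_Rsqr_abs.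
  unfold scal; simpl; unfold mult; simpl. unfold vol_density. ring.
Qed.

Lemma Vol_pos : 0 < Vol (PI / 8).
Proof.
  pose proof PI_RGT_0. pose proof cos_PI4_gt_half.
  rewrite Vol_eq. apply Rmult_lt_0_compat; [lra |].
  apply Rlt_le_trans with (RInt (fun _ => PI / 2 * cos (PI / 4)) 0 (PI / 2)).
  - rewrite RInt_const_R. apply Rmult_lt_0_compat; [lra | apply Rmult_lt_0_compat; lra].
  - apply RInt_le; [lra | apply ex_RInt_const | apply ex_RInt_vol_slice |].
    intros; apply vol_slice_ge.
Qed.

Lemma Vol_lt_cube : Vol (PI / 8) < (PI / 2) ^ 3.
Proof.
  pose proof PI_RGT_0.
  assert (Hcs : cos (PI / 16) < 1) by (rewrite <- cos_0; apply cos_decreasing_1; lra).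
  assert (Hall : forall x, vol_slice x <= PI / 2 * 1)
    by (intro; apply vol_slice_le_const; intros; apply vol_density_bounds).
  assert (Hstrip : forall x, PI / 16 <= x <= 3 * PI / 16 -> vol_slice x <= PI / 2 * cos (PI / 16))
    by (intros; apply vol_slice_le_const; intros; apply vol_density_on_strip; auto).
  assert (K1 : RInt vol_slice 0 (PI / 16) <= (PI / 16 - 0) * (PI / 2 * 1)).
  { rewrite <- RInt_const_R. apply RInt_le; [lra | apply ex_RInt_vol_slice | apply ex_RInt_const | auto]. }
  assert (K2 : RInt vol_slice (PI / 16) (3 * PI / 16) <= (3 * PI / 16 - PI / 16) * (PI / 2 * cos (PI / 16))).
  { rewrite <- RInt_const_R. apply RInt_le; [lra | apply ex_RInt_vol_slice | apply ex_RInt_const | intros; apply Hstrip; lra]. }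
  assert (K3 : RInt vol_slice (3 * PI / 16) (PI / 2) <= (PI / 2 - 3 * PI / 16) * (PI / 2 * 1)).
  { rewrite <- RInt_const_R. apply RInt_le; [lra | apply ex_RInt_vol_slice | apply ex_RInt_const | auto]. }
  rewrite Vol_eq, <- (RInt_Chasles vol_slice 0 (PI / 16) (PI / 2)) by apply ex_RInt_vol_slice.
  rewrite <- (RInt_Chasles vol_slice (PI / 16) (3 * PI / 16) (PI / 2)) by apply ex_RInt_vol_slice.
  change plus with Rplus.
  assert (PI * PI * cos (PI / 16) < PI * PI * 1) by (apply Rmult_lt_compat_l; nra).
  nra.
Qed.

(** * Deck transformations *)

Definition rot_x (n : Z) (x y : R) : R :=
  match (n mod 4)%Z with 0%Z => x | 1%Z => - y | 2%Z => - x | _ => y end.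
Definition rot_y (n : Z) (x y : R) : R :=
  match (n mod 4)%Z with 0%Z => y | 1%Z => x | 2%Z => - y | _ => - x end.

Definition deck (a : R) (n i j : Z) (p : pt) : pt :=
  let '(x, y, z) := p in
  (rot_x n x y + 4 * a * IZR i, rot_y n x y + 4 * a * IZR j, z + IZR n * (PI / 2)).

Lemma Zmod_4_cases (n : Z) : (n mod 4 = 0 \/ n mod 4 = 1 \/ n mod 4 = 2 \/ n mod 4 = 3)%Z.
Proof. pose proof (Z.mod_pos_bound n 4). lia. Qed.

Lemma rot_succ (n : Z) (x y : R) : rot_x (n + 1) x y = - rot_y n x y /\ rot_y (n + 1) x y = rot_x n x y.
Proof.
  unfold rot_x, rot_y. rewrite Zplus_mod, (Zmod_small 1) by lia.
  destruct (Zmod_4_cases n) as [H|[H|[H|H]]]; rewrite H; simpl; split; ring.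
Qed.

Lemma rot_pred (n : Z) (x y : R) : rot_x (n - 1) x y = rot_y n x y /\ rot_y (n - 1) x y = - rot_x n x y.
Proof.
  unfold rot_x, rot_y. replace (n - 1)%Z with (n + 3 + (-1) * 4)%Z by ring.
  rewrite Z_mod_plus_full, Zplus_mod, (Zmod_small 3) by lia.
  destruct (Zmod_4_cases n) as [H|[H|[H|H]]]; rewrite H; simpl; split; ring.
Qed.

Lemma rot_add_mul4 (n k : Z) (x y : R) :
  rot_x (n + k * 4) x y = rot_x n x y /\ rot_y (n + k * 4) x y = rot_y n x y.
Proof. unfold rot_x, rot_y. rewrite Z_mod_plus_full. auto. Qed.

Lemma pt_eq (x y z x' y' z' : R) : x = x' /\ y = y' /\ z = z' -> (x, y, z) = (x', y', z').
Proof. intros [-> [-> ->]]. reflexivity. Qed.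

Lemma deck_generator (a : R) (s : pt -> pt) (n i j : Z) : generator a s ->
  exists n' i' j', forall p, s (deck a n i j p) = deck a n' i' j' p.
Proof.
  intros [->|[->|[->|[->|[->|[->|[->| ->]]]]]]].
  - exists n, (i + 1)%Z, j. intros [[x y] z]. unfold deck, tx. rewrite plus_IZR.
    apply pt_eq; repeat split; lra.
  - exists n, (i - 1)%Z, j. intros [[x y] z]. unfold deck, txi. rewrite minus_IZR.
    apply pt_eq; repeat split; lra.
  - exists n, i, (j + 1)%Z. intros [[x y] z]. unfold deck, ty. rewrite plus_IZR.
    apply pt_eq; repeat split; lra.
  - exists n, i, (j - 1)%Z. intros [[x y] z]. unfold deck, tyi. rewrite minus_IZR.
    apply pt_eq; repeat split; lra.
  - exists (n + 1 * 4)%Z, i, j. intros [[x y] z]. unfold deck, tz.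
    destruct (rot_add_mul4 n 1 x y) as [-> ->]. rewrite plus_IZR, mult_IZR.
    apply pt_eq; repeat split; lra.
  - exists (n + (-1) * 4)%Z, i, j. intros [[x y] z]. unfold deck, tzi.
    destruct (rot_add_mul4 n (-1) x y) as [-> ->]. rewrite plus_IZR, mult_IZR.
    apply pt_eq; repeat split; lra.
  - exists (n + 1)%Z, (- j)%Z, i. intros [[x y] z]. unfold deck, tau.
    destruct (rot_succ n x y) as [-> ->]. rewrite plus_IZR, opp_IZR.
    apply pt_eq; repeat split; lra.
  - exists (n - 1)%Z, j, (- i)%Z. intros [[x y] z]. unfold deck, taui.
    destruct (rot_pred n x y) as [-> ->]. rewrite minus_IZR, opp_IZR.
    apply pt_eq; repeat split; lra.
Qed.

Lemma in_Gamma_deck (a : R) (g : pt -> pt) :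
  in_Gamma a g -> exists n i j, forall p, g p = deck a n i j p.
Proof.
  induction 1 as [| f s _ [n [i [j IH]]] Hs].
  - exists 0%Z, 0%Z, 0%Z. intros [[x y] z]. unfold deck, rot_x, rot_y. simpl.
    apply pt_eq; repeat split; lra.
  - destruct (deck_generator a s n i j Hs) as [n' [i' [j' Hs']]].
    exists n', i', j'. intro p. rewrite IH. apply Hs'.
Qed.

(** * Calibrations *)

Definition C1 (g : R -> R) : Prop :=
  (forall u, ex_derive g u) /\ (forall u, continuous (Derive g) u).

Definition speed (a : R) (cx cy cz : R -> R) (u : R) : R :=
  sqrt (h_speed2 a (cx u) (cy u) (Derive cx u) (Derive cy u) (Derive cz u)).

Lemma continuous_Rplus_comp (f g : R -> R) (x : R) :
  continuous f x -> continuous g x -> continuous (fun y => f y + g y) x.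
Proof. apply (continuous_plus f g x). Qed.

Lemma continuous_Rmult_comp (f g : R -> R) (x : R) :
  continuous f x -> continuous g x -> continuous (fun y => f y * g y) x.
Proof. apply (continuous_mult f g x). Qed.

Lemma continuous_pow2_comp (f : R -> R) (x : R) : continuous f x -> continuous (fun y => f y ^ 2) x.
Proof.
  intro Hf. apply (continuous_ext (fun y => f y * (f y * 1))); [intros; simpl; ring |].
  repeat apply continuous_Rmult_comp; auto. apply continuous_const.
Qed.

Lemma continuous_speed (a : R) (gx gy gz : R -> R) (u : R) :
  C1 gx -> C1 gy -> C1 gz -> continuous (speed a gx gy gz) u.
Proof.
  intros [Dx Cx] [Dy Cy] [Dz Cz]. unfold speed, h_speed2.
  assert (Hcont : forall g, (forall u, ex_derive g u) -> continuous g u)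
    by (intros g Dg; apply (ex_derive_continuous (K := R_AbsRing) (V := R_NormedModule)), Dg).
  apply continuous_sqrt_comp.
  apply continuous_Rplus_comp; [apply continuous_Rplus_comp | apply continuous_Rmult_comp];
    apply continuous_pow2_comp; auto.
  apply continuous_cos_comp, continuous_distDelta_comp; auto.
Qed.

Lemma increment_le_RInt (f psi : R -> R) (u v : R) : u <= v ->
  (forall z, continuous f z) ->
  (forall w, u <= w <= v -> ex_derive psi w /\ Derive psi w <= f w) ->
  psi v - psi u <= RInt f u v.
Proof.
  intros Huv Hf Hpsi.
  assert (HF : forall x, is_derive (fun b => RInt f u b) x (f x)).
  { intro x. apply (is_derive_RInt f _ u x); [| apply Hf].
    apply filter_forall. intro b. apply (RInt_correct (V := R_CompleteNormedModule)).
    apply ex_RInt_continuous_R, Hf. }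
  destruct (MVT_gen (fun x => RInt f u x - psi x) u v (fun x => f x - Derive psi x))
    as [c [Hc Heq]]; rewrite Rmin_left, Rmax_right in * by lra.
  - intros x Hx. apply (is_derive_minus (fun x => RInt f u x) psi); [apply HF |].
    apply Derive_correct, Hpsi. lra.
  - intros x Hx. apply continuity_pt_filterlim.
    apply (continuous_minus (fun x => RInt f u x) psi).
    + apply (ex_derive_continuous (K := R_AbsRing) (V := R_NormedModule)). eexists. apply HF.
    + apply (ex_derive_continuous (K := R_AbsRing) (V := R_NormedModule)), Hpsi. lra.
  - rewrite (RInt_point u f) in Heq. change (@zero R_CompleteNormedModule) with 0 in Heq.
    destruct (Hpsi c) as [_ Hd]; [lra |].
    assert (0 <= (f c - Derive psi c) * (v - u)) by (apply Rmult_le_pos; lra).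
    lra.
Qed.

Lemma locally_eq_of_interval (f g : R -> R) (s t u : R) : s < u < t ->
  (forall v, s <= v <= t -> f v = g v) -> locally u (fun v => g v = f v).
Proof.
  intros Hu H. assert (He : 0 < Rmin (u - s) (t - u)) by (apply Rmin_pos; lra).
  exists (mkposreal _ He). intros v Hv. change (Rabs (v - u) < Rmin (u - s) (t - u)) in Hv.
  apply Rabs_def2 in Hv. pose proof (Rmin_l (u - s) (t - u)). pose proof (Rmin_r (u - s) (t - u)).
  symmetry; apply H; lra.
Qed.

Section Calibration.
Variable a : R.
Variables cx cy cz : R -> R.
Variable Phi : R -> R -> R -> R.
Variable G : R -> R -> R -> Prop.
Hypothesis curve_in_G : forall u, 0 <= u <= 1 -> G (cx u) (cy u) (cz u).
Hypothesis Phi_calibrates : forall gx gy gz, C1 gx -> C1 gy -> C1 gz ->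
  forall u, G (gx u) (gy u) (gz u) ->
  ex_derive (fun v => Phi (gx v) (gy v) (gz v)) u /\
  Derive (fun v => Phi (gx v) (gy v) (gz v)) u <= speed a gx gy gz u.

Let psi (u : R) : R := Phi (cx u) (cy u) (cz u).

Lemma calibration_piece (s t : R) : 0 <= s -> s < t -> t <= 1 ->
  C1_on cx s t -> C1_on cy s t -> C1_on cz s t ->
  forall U V, s <= U -> U <= V -> V <= t ->
  ex_RInt (speed a cx cy cz) U V /\ psi V - psi U <= RInt (speed a cx cy cz) U V.
Proof.
  intros H0s Hst Ht1 [gx [Ex Gx]] [gy [Ey Gy]] [gz [Ez Gz]] U V HsU HUV HVt.
  change (C1 gx) in Gx. change (C1 gy) in Gy. change (C1 gz) in Gz.
  assert (Hsp : forall w, U < w < V -> speed a gx gy gz w = speed a cx cy cz w).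
  { intros w Hw. unfold speed. rewrite (Ex w), (Ey w) by lra.
    rewrite (Derive_ext_loc cx gx w), (Derive_ext_loc cy gy w), (Derive_ext_loc cz gz w);
      [reflexivity | ..]; apply (locally_eq_of_interval _ _ s t); auto; lra. }
  assert (Hps : forall w, s <= w <= t -> psi w = Phi (gx w) (gy w) (gz w)).
  { intros w Hw. unfold psi. rewrite <- Ex, <- Ey, <- Ez by lra. reflexivity. }
  split.
  - apply (ex_RInt_ext (speed a gx gy gz)); [rewrite Rmin_left, Rmax_right by lra; auto |].
    apply ex_RInt_continuous_R. intro; apply continuous_speed; auto.
  - rewrite <- (RInt_ext (speed a gx gy gz)) by (rewrite Rmin_left, Rmax_right by lra; auto).
    rewrite (Hps U), (Hps V) by lra.
    apply (increment_le_RInt _ (fun v => Phi (gx v) (gy v) (gz v)));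
      [lra | intro; apply continuous_speed; auto |].
    intros w Hw. apply Phi_calibrates; auto.
    rewrite Ex, Ey, Ez by lra. apply curve_in_G. lra.
Qed.

Lemma calibration : pw_smooth cx cy cz ->
  forall U V, 0 <= U -> U <= V -> V <= 1 ->
  ex_RInt (speed a cx cy cz) U V /\ psi V - psi U <= RInt (speed a cx cy cz) U V.
Proof.
  intros [n [p [P0 [Pn [Pinc Pc1]]]]].
  assert (Hmono : forall m k, (k <= m)%nat -> (m <= n)%nat -> p k <= p m).
  { induction m; intros k Hk Hm; [replace k with 0%nat by lia; lra |].
    destruct (Nat.eq_dec k (S m)) as [-> | Hne]; [lra |].
    pose proof (Pinc m ltac:(lia)). specialize (IHm k ltac:(lia) ltac:(lia)). lra. }
  assert (Q : forall k, (k <= n)%nat -> forall U V, 0 <= U -> U <= V -> V <= p k ->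
    ex_RInt (speed a cx cy cz) U V /\ psi V - psi U <= RInt (speed a cx cy cz) U V).
  { induction k; intros Hk U V H0U HUV HV.
    - rewrite P0 in HV. assert (U = V) as -> by lra.
      split; [apply ex_RInt_point |].
      rewrite (RInt_point V). change (@zero R_CompleteNormedModule) with 0. lra.
    - pose proof (Pinc k ltac:(lia)) as Hinc. destruct (Pc1 k ltac:(lia)) as [C1x [C1y C1z]].
      pose proof (Hmono k 0%nat ltac:(lia) ltac:(lia)) as Hpk. rewrite P0 in Hpk.
      pose proof (Hmono n (S k) Hk ltac:(lia)) as Hpk1. rewrite Pn in Hpk1.
      destruct (Rle_lt_dec V (p k)) as [HVk | HVk]; [apply IHk; auto; lia |].
      destruct (Rle_lt_dec (p k) U) as [HkU | HkU].
      + apply (calibration_piece (p k) (p (S k))); auto; lra.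
      + destruct (IHk ltac:(lia) U (p k)) as [E1 B1]; try lra.
        destruct (calibration_piece (p k) (p (S k)) Hpk Hinc Hpk1 C1x C1y C1z (p k) V)
          as [E2 B2]; try lra.
        split; [apply (ex_RInt_Chasles _ U (p k) V); auto |].
        rewrite <- (RInt_Chasles _ U (p k) V E1 E2). change plus with Rplus. lra. }
  intros U V H0U HUV HV1. apply (Q n); auto. rewrite Pn; auto.
Qed.

End Calibration.

Lemma linear_horizontal_bound (a e1 e2 : R) (cx cy cz : R -> R) :
  pw_smooth cx cy cz -> e1 ^ 2 + e2 ^ 2 <= 1 ->
  forall U V, 0 <= U -> U <= V -> V <= 1 ->
  ex_RInt (speed a cx cy cz) U V /\
  (e1 * cx V + e2 * cy V) - (e1 * cx U + e2 * cy U) <= RInt (speed a cx cy cz) U V.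
Proof.
  intros Hpw He.
  apply (calibration a cx cy cz (fun x y _ => e1 * x + e2 * y) (fun _ _ _ => True)); auto.
  intros gx gy gz [Dx _] [Dy _] _ u _.
  assert (Hd : is_derive (fun v => e1 * gx v + e2 * gy v) u (e1 * Derive gx u + e2 * Derive gy u)).
  { auto_derive; [auto | rewrite !Rmult_1_l; reflexivity]. }
  split; [eexists; exact Hd |].
  replace (Derive (fun v : R => e1 * gx v + e2 * gy v) u)
    with (e1 * Derive gx u + e2 * Derive gy u) by (symmetry; apply is_derive_unique, Hd).
  unfold speed, h_speed2. eapply Rle_trans; [apply Cauchy_Schwarz_2; eauto |].
  apply sqrt_le_1_alt. pose proof (pow2_ge_0 (cos (distDelta a (gx u) (gy u)))).
  pose proof (pow2_ge_0 (Derive gz u)). nra.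
Qed.

Lemma horizontal_bound (a : R) (cx cy cz : R -> R) : pw_smooth cx cy cz ->
  forall U V, 0 <= U -> U <= V -> V <= 1 ->
  ex_RInt (speed a cx cy cz) U V /\
  sqrt ((cx V - cx U) ^ 2 + (cy V - cy U) ^ 2) <= RInt (speed a cx cy cz) U V.
Proof.
  intros Hpw U V HU HUV HV.
  set (dx := cx V - cx U); set (dy := cy V - cy U); set (D := sqrt (dx ^ 2 + dy ^ 2)).
  assert (HDD : D * D = dx ^ 2 + dy ^ 2) by (apply sqrt_sqrt; nra).
  assert (HD0 : 0 <= D) by apply sqrt_pos. clearbody D.
  destruct (Req_dec D 0) as [HD | HD].
  - destruct (linear_horizontal_bound a 0 0 cx cy cz Hpw ltac:(lra) U V) as [E B]; auto.
    split; [auto | lra].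
  - assert (Dpos : 0 < D) by lra.
    destruct (linear_horizontal_bound a (dx / D) (dy / D) cx cy cz Hpw) with U V as [E B]; auto.
    + right. field_simplify; [rewrite <- HDD; field |]; lra.
    + split; [auto |]. eapply Rle_trans; [| exact B]. right.
      apply (Rmult_eq_reg_r D); [| lra]. fold dx dy.
      transitivity (dx ^ 2 + dy ^ 2); [lra |]. unfold dx, dy. field. lra.
Qed.

Lemma vertical_bound (cx cy cz : R -> R) : pw_smooth cx cy cz ->
  Rabs (cz 1 - cz 0) / 2 <= h_length (PI / 8) cx cy cz.
Proof.
  intro Hpw.
  assert (Hlin : forall c, Rabs c <= 1 / 2 -> c * cz 1 - c * cz 0 <= h_length (PI / 8) cx cy cz).
  { intros c Hc.
    apply (calibration (PI / 8) cx cy cz (fun _ _ z => c * z) (fun _ _ _ => True)); auto; try lra.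
    intros gx gy gz _ _ [Dz _] u _.
    assert (Hd : is_derive (fun v => c * gz v) u (c * Derive gz u)) by (auto_derive; [auto | rewrite !Rmult_1_l; reflexivity]).
    split; [eexists; exact Hd |].
    replace (Derive (fun v : R => c * gz v) u) with (c * Derive gz u)
      by (symmetry; apply is_derive_unique, Hd).
    unfold speed, h_speed2.
    set (Z := Derive gz u); set (k := cos (distDelta (PI / 8) (gx u) (gy u))).
    assert (Hk : 1 / 2 < k) by (pose proof cos_PI4_gt_half; pose proof (cos_distDelta_ge (gx u) (gy u)); unfold k; lra).
    apply Rle_trans with (sqrt ((k * Z) ^ 2)).
    - rewrite <- Rsqr_pow2, sqrt_Rsqr_abs, Rabs_mult, (Rabs_right k) by lra.
      eapply Rle_trans; [apply Rle_abs |]. rewrite Rabs_mult.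
      apply Rmult_le_compat_r; [apply Rabs_pos | lra].
    - apply sqrt_le_1_alt. pose proof (pow2_ge_0 (Derive gx u)). pose proof (pow2_ge_0 (Derive gy u)).
      rewrite Rpow_mult_distr. lra. }
  destruct (Rle_lt_dec 0 (cz 1 - cz 0)).
  - rewrite Rabs_right by lra. pose proof (Hlin (1 / 2) ltac:(rewrite Rabs_right; lra)). lra.
  - rewrite Rabs_left by lra.
    pose proof (Hlin (- (1 / 2)) ltac:(rewrite Rabs_Ropp, Rabs_right; lra)). lra.
Qed.

(** * The map to the unit 3-sphere *)

(* Only
   [q >= 0] matters; for [q <= 0] the first-order Taylor polynomials at [0] are used,
   which makes the functions differentiable at [q = 0]. *)
Definition cos_sqrt (q : R) : R := if Rle_dec q 0 then 1 - q / 2 else cos (sqrt q).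
Definition sinc_sqrt (q : R) : R := if Rle_dec q 0 then 1 - q / 6 else sin (sqrt q) / sqrt q.
Definition cos_sqrt' (q : R) : R := - sinc_sqrt q / 2.
Definition sinc_sqrt' (q : R) : R :=
  if Rle_dec q 0 then - 1 / 6 else (cos_sqrt q - sinc_sqrt q) / (2 * q).

Lemma cos_sqrt_0 : cos_sqrt 0 = 1.
Proof. unfold cos_sqrt. destruct (Rle_dec 0 0); lra. Qed.
Lemma sinc_sqrt_0 : sinc_sqrt 0 = 1.
Proof. unfold sinc_sqrt. destruct (Rle_dec 0 0); lra. Qed.
Lemma sinc_sqrt'_0 : sinc_sqrt' 0 = - 1 / 6.
Proof. unfold sinc_sqrt'. destruct (Rle_dec 0 0); lra. Qed.

Lemma cos_sqrt_pos (q : R) : 0 < q -> cos_sqrt q = cos (sqrt q).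
Proof. intros. unfold cos_sqrt. destruct (Rle_dec q 0); [lra | auto]. Qed.
Lemma sinc_sqrt_pos (q : R) : 0 < q -> sinc_sqrt q = sin (sqrt q) / sqrt q.
Proof. intros. unfold sinc_sqrt. destruct (Rle_dec q 0); [lra | auto]. Qed.
Lemma sinc_sqrt'_pos (q : R) : 0 < q -> sinc_sqrt' q = (cos_sqrt q - sinc_sqrt q) / (2 * q).
Proof. intros. unfold sinc_sqrt'. destruct (Rle_dec q 0); [lra | auto]. Qed.

Lemma sqrt_pos_sqr (q : R) : 0 < q -> 0 < sqrt q /\ sqrt q * sqrt q = q.
Proof. intros. split; [apply sqrt_lt_R0; auto | apply sqrt_sqrt; lra]. Qed.

Lemma sqrt_le_1_of_le (h : R) : h <= 1 -> sqrt h <= 1.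
Proof.
  intro. destruct (Rle_lt_dec h 0); [rewrite sqrt_neg_0 by lra; lra |].
  rewrite <- sqrt_1. apply sqrt_le_1_alt. lra.
Qed.

Lemma is_derive_of_quadratic_error (f : R -> R) (l K : R) : 0 <= K ->
  (forall h, Rabs h <= 1 -> Rabs (f h - f 0 - l * h) <= K * h ^ 2) -> is_derive f 0 l.
Proof.
  intros HK H. apply is_derive_Reals. intros eps Heps.
  assert (Hd : 0 < Rmin 1 (eps / (K + 1))) by (apply Rmin_pos; [lra | apply Rdiv_lt_0_compat; lra]).
  exists (mkposreal _ Hd). intros h Hh0 Hh. simpl in Hh.
  pose proof (Rmin_l 1 (eps / (K + 1))). pose proof (Rmin_r 1 (eps / (K + 1))).
  rewrite Rplus_0_l. specialize (H h ltac:(lra)).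
  assert (Hah : 0 < Rabs h) by (apply Rabs_pos_lt; auto).
  replace ((f h - f 0) / h - l) with ((f h - f 0 - l * h) / h) by (field; auto).
  unfold Rdiv. rewrite Rabs_mult, Rabs_inv.
  apply (Rmult_lt_reg_r (Rabs h)); auto. rewrite Rmult_assoc, Rinv_l, Rmult_1_r by lra.
  eapply Rle_lt_trans; [exact H |].
  replace (h ^ 2) with (Rabs h * Rabs h) by (rewrite <- Rabs_mult, Rabs_right; [ring | nra]).
  assert (K * Rabs h <= K * (eps / (K + 1))) by (apply Rmult_le_compat_l; lra).
  assert (K * (eps / (K + 1)) < eps) by (apply (Rmult_lt_reg_r (K + 1)); [lra | field_simplify; lra]).
  nra.
Qed.

Lemma locally_pos_eq (f g : R -> R) (q : R) : 0 < q ->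
  (forall x, 0 < x -> f x = g x) -> locally q (fun x => g x = f x).
Proof.
  intros Hq H. exists (mkposreal _ Hq). intros y Hy. change (Rabs (y - q) < q) in Hy.
  apply Rabs_def2 in Hy. symmetry. apply H. lra.
Qed.

Lemma is_derive_cos_sqrt (q : R) : 0 <= q -> is_derive cos_sqrt q (cos_sqrt' q).
Proof.
  intro Hq. destruct (Req_dec q 0) as [-> | Hq0].
  - unfold cos_sqrt'. rewrite sinc_sqrt_0. apply (is_derive_of_quadratic_error _ _ (1 / 24)); [lra |].
    intros h Hh. rewrite cos_sqrt_0. unfold cos_sqrt. destruct (Rle_dec h 0).
    + match goal with |- Rabs ?e <= _ => replace e with 0 by field end. rewrite Rabs_R0.
      pose proof (pow2_ge_0 h). lra.
    + destruct (sqrt_pos_sqr h ltac:(lra)) as [Hr Hrr].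
      pose proof (sqrt_le_1_of_le h ltac:(apply Rabs_le_between in Hh; lra)).
      destruct (cos_bound (sqrt h) 0) as [B1 B2]; [pose proof PI2_1; lra .. |].
      unfold cos_approx, cos_term in B1, B2. simpl in B1, B2.
      rewrite Rabs_right; nra.
  - destruct (sqrt_pos_sqr q ltac:(lra)) as [Hr Hrr].
    apply (is_derive_ext_loc (fun x => cos (sqrt x))).
    { apply locally_pos_eq; [lra |]. intros; rewrite cos_sqrt_pos; auto. }
    unfold cos_sqrt'. rewrite sinc_sqrt_pos by lra.
    auto_derive; [lra | field; lra].
Qed.

Lemma is_derive_sinc_sqrt (q : R) : 0 <= q -> is_derive sinc_sqrt q (sinc_sqrt' q).
Proof.
  intro Hq. destruct (Req_dec q 0) as [-> | Hq0].
  - rewrite sinc_sqrt'_0. apply (is_derive_of_quadratic_error _ _ (1 / 120)); [lra |].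
    intros h Hh. rewrite sinc_sqrt_0. unfold sinc_sqrt. destruct (Rle_dec h 0).
    + match goal with |- Rabs ?e <= _ => replace e with 0 by field end. rewrite Rabs_R0.
      pose proof (pow2_ge_0 h). lra.
    + destruct (sqrt_pos_sqr h ltac:(lra)) as [Hr Hrr].
      pose proof (sqrt_le_1_of_le h ltac:(apply Rabs_le_between in Hh; lra)).
      destruct (sin_bound (sqrt h) 0) as [B1 B2]; [lra | pose proof PI2_1; lra |].
      unfold sin_approx, sin_term in B1, B2. simpl in B1, B2.
      set (r := sqrt h) in *. clearbody r. subst h.
      replace (sin r / r - 1 - - 1 / 6 * (r * r)) with ((sin r - (r - r ^ 3 / 6)) / r) by (field; lra).
      rewrite Rabs_right by (apply Rle_ge, Rmult_le_pos; [nra | left; apply Rinv_0_lt_compat; lra]).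
      apply (Rmult_le_reg_r r); [lra |]. unfold Rdiv. rewrite Rmult_assoc, Rinv_l by lra. nra.
  - destruct (sqrt_pos_sqr q ltac:(lra)) as [Hr Hrr].
    apply (is_derive_ext_loc (fun x => sin (sqrt x) / sqrt x)).
    { apply locally_pos_eq; [lra |]. intros; rewrite sinc_sqrt_pos; auto. }
    rewrite sinc_sqrt'_pos, cos_sqrt_pos, sinc_sqrt_pos by lra.
    auto_derive; [repeat split; lra |].
    set (r := sqrt q) in *. clearbody r. subst q. field. lra.
Qed.

Lemma sin_cos_pow2 (r : R) : sin r ^ 2 + cos r ^ 2 = 1.
Proof. rewrite <- !Rsqr_pow2. apply sin2_cos2. Qed.

(* The three identities below say that [(x, y, z) |-> (C cos z, C sin z, S x, S y)]
   with [C = cos_sqrt (x^2 + y^2)], [S = sinc_sqrt (x^2 + y^2)] maps into the unit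
   sphere and sends radial segments to unit-speed great circles. *)
Lemma cos_sqrt_sinc_sqrt_unit (q : R) : 0 <= q -> cos_sqrt q ^ 2 + q * sinc_sqrt q ^ 2 = 1.
Proof.
  intro Hq. destruct (Req_dec q 0) as [-> | Hq0]; [rewrite cos_sqrt_0, sinc_sqrt_0; ring |].
  destruct (sqrt_pos_sqr q ltac:(lra)) as [Hr Hrr].
  rewrite cos_sqrt_pos, sinc_sqrt_pos by lra. set (r := sqrt q) in *. clearbody r. subst q.
  pose proof (sin_cos_pow2 r). field_simplify; nra.
Qed.

Lemma cos_sqrt_sinc_sqrt_orth (q : R) : 0 <= q ->
  cos_sqrt q * cos_sqrt' q + sinc_sqrt q ^ 2 / 2 + q * sinc_sqrt q * sinc_sqrt' q = 0.
Proof.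
  intro Hq. unfold cos_sqrt'.
  destruct (Req_dec q 0) as [-> | Hq0]; [rewrite cos_sqrt_0, sinc_sqrt_0; field |].
  destruct (sqrt_pos_sqr q ltac:(lra)) as [Hr Hrr].
  rewrite sinc_sqrt'_pos, cos_sqrt_pos, sinc_sqrt_pos by lra.
  set (r := sqrt q) in *. clearbody r. subst q. field. lra.
Qed.

Lemma cos_sqrt_sinc_sqrt_speed (q : R) : 0 <= q ->
  4 * q * (cos_sqrt' q ^ 2 + q * sinc_sqrt' q ^ 2 + sinc_sqrt q * sinc_sqrt' q)
  + sinc_sqrt q ^ 2 = 1.
Proof.
  intro Hq. unfold cos_sqrt'.
  destruct (Req_dec q 0) as [-> | Hq0]; [rewrite sinc_sqrt_0; ring |].
  destruct (sqrt_pos_sqr q ltac:(lra)) as [Hr Hrr].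
  rewrite sinc_sqrt'_pos, cos_sqrt_pos, sinc_sqrt_pos by lra.
  set (r := sqrt q) in *. clearbody r. subst q.
  pose proof (sin_cos_pow2 r) as H. field_simplify; [| lra].
  replace (32 * r ^ 2 * sin r ^ 2 + 32 * r ^ 2 * cos r ^ 2)
    with (32 * r ^ 2 * (sin r ^ 2 + cos r ^ 2)) by ring.
  rewrite H. field. lra.
Qed.

Lemma sinc_sqrt_sqr_le_1 (q : R) : 0 <= q -> sinc_sqrt q ^ 2 <= 1.
Proof.
  intro Hq. destruct (Req_dec q 0) as [-> | Hq0]; [rewrite sinc_sqrt_0; lra |].
  destruct (sqrt_pos_sqr q ltac:(lra)) as [Hr _].
  rewrite sinc_sqrt_pos by lra. set (r := sqrt q) in *. clearbody r.
  assert (Hs : Rabs (sin r) <= r).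
  { apply Rabs_le. split; [| left; apply sin_lt_x; auto].
    destruct (Rle_lt_dec r PI); [pose proof (sin_ge_0 r); lra |].
    pose proof (SIN_bound r). pose proof PI2_1. lra. }
  assert (H : 0 <= Rabs (sin r) / r <= 1).
  { split; [apply Rmult_le_pos; [apply Rabs_pos | left; apply Rinv_0_lt_compat; auto] |].
    apply (Rmult_le_reg_r r); auto. unfold Rdiv. rewrite Rmult_assoc, Rinv_l by lra. lra. }
  replace ((sin r / r) ^ 2) with ((Rabs (sin r) / r) ^ 2)
    by (unfold Rdiv; rewrite !Rpow_mult_distr, <- !Rsqr_pow2, <- Rsqr_abs; reflexivity).
  nra.
Qed.

Lemma cos_sqrt_sqr_le (q d : R) : 0 <= q -> sqrt q <= 3 * PI / 4 ->
  0 <= d -> d <= sqrt q -> d <= PI / 4 -> cos_sqrt q ^ 2 <= cos d ^ 2.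
Proof.
  intros Hq Hr Hd Hdr HdP. pose proof PI_RGT_0.
  destruct (Req_dec q 0) as [-> | Hq0].
  { rewrite sqrt_0 in Hdr. assert (d = 0) as -> by lra. rewrite cos_sqrt_0, cos_0. lra. }
  rewrite cos_sqrt_pos by lra. set (r := sqrt q) in *. clearbody r.
  assert (Hcd : 0 <= cos d) by (apply cos_ge_0; lra).
  destruct (Rle_lt_dec r (PI / 2)).
  - pose proof (cos_ge_0 r ltac:(lra) ltac:(lra)). pose proof (cos_decreasing d r). nra.
  - replace (cos r) with (- cos (PI - r)) by (rewrite cos_minus, cos_PI, sin_PI; ring).
    pose proof (cos_ge_0 (PI - r) ltac:(lra) ltac:(lra)). pose proof (cos_decreasing d (PI - r)). nra.
Qed.

Lemma unit_dot_orth_bound (e1 e2 e3 e4 s1 s2 s3 s4 t1 t2 t3 t4 : R) :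
  e1 ^ 2 + e2 ^ 2 + e3 ^ 2 + e4 ^ 2 = 1 -> s1 ^ 2 + s2 ^ 2 + s3 ^ 2 + s4 ^ 2 = 1 ->
  s1 * t1 + s2 * t2 + s3 * t3 + s4 * t4 = 0 ->
  let b := e1 * s1 + e2 * s2 + e3 * s3 + e4 * s4 in
  0 <= 1 - b ^ 2 /\
  (e1 * t1 + e2 * t2 + e3 * t3 + e4 * t4) ^ 2
  <= (1 - b ^ 2) * (t1 ^ 2 + t2 ^ 2 + t3 ^ 2 + t4 ^ 2).
Proof.
  intros He Hs Hst b.
  assert (Hb : b ^ 2 <= 1).
  { pose proof (Cauchy_Schwarz_4 e1 e2 e3 e4 s1 s2 s3 s4) as C. rewrite He, Hs in C. unfold b; lra. }
  split; [lra |].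
  (* project [e] onto the orthogonal complement of [s], which contains [t] *)
  replace (e1 * t1 + e2 * t2 + e3 * t3 + e4 * t4)
    with ((e1 - b * s1) * t1 + (e2 - b * s2) * t2 + (e3 - b * s3) * t3 + (e4 - b * s4) * t4)
    by (transitivity (e1 * t1 + e2 * t2 + e3 * t3 + e4 * t4 - b * (s1 * t1 + s2 * t2 + s3 * t3 + s4 * t4));
        [ring | rewrite Hst; ring]).
  replace (1 - b ^ 2)
    with ((e1 - b * s1) ^ 2 + (e2 - b * s2) ^ 2 + (e3 - b * s3) ^ 2 + (e4 - b * s4) ^ 2)
    by (transitivity ((e1 ^ 2 + e2 ^ 2 + e3 ^ 2 + e4 ^ 2) - 2 * b * b
          + b ^ 2 * (s1 ^ 2 + s2 ^ 2 + s3 ^ 2 + s4 ^ 2)); [unfold b; ring | rewrite He, Hs; ring]).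
  apply Cauchy_Schwarz_4.
Qed.

Section SphereMap.
Variables X Y Z X' Y' Z' k : R.
Let q := X ^ 2 + Y ^ 2.
Let q' := 2 * X * X' + 2 * Y * Y'.
Let s1 := cos_sqrt q * cos Z.
Let s2 := cos_sqrt q * sin Z.
Let s3 := sinc_sqrt q * X.
Let s4 := sinc_sqrt q * Y.
Let t1 := cos_sqrt' q * q' * cos Z - cos_sqrt q * sin Z * Z'.
Let t2 := cos_sqrt' q * q' * sin Z + cos_sqrt q * cos Z * Z'.
Let t3 := sinc_sqrt' q * q' * X + sinc_sqrt q * X'.
Let t4 := sinc_sqrt' q * q' * Y + sinc_sqrt q * Y'.

Let q_nonneg : 0 <= q.
Proof. unfold q. nra. Qed.

Lemma sphere_map_unit : s1 ^ 2 + s2 ^ 2 + s3 ^ 2 + s4 ^ 2 = 1.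
Proof.
  rewrite <- (cos_sqrt_sinc_sqrt_unit q q_nonneg), <- (Rmult_1_r (cos_sqrt q ^ 2)), <- (sin_cos_pow2 Z).
  unfold s1, s2, s3, s4, q. ring.
Qed.

Lemma sphere_map_tangent : s1 * t1 + s2 * t2 + s3 * t3 + s4 * t4 = 0.
Proof.
  transitivity (q' * (cos_sqrt q * cos_sqrt' q * (sin Z ^ 2 + cos Z ^ 2)
    + sinc_sqrt q * sinc_sqrt' q * q) + sinc_sqrt q ^ 2 * (X * X' + Y * Y')).
  { unfold s1, s2, s3, s4, t1, t2, t3, t4, q. ring. }
  rewrite sin_cos_pow2.
  transitivity (q' * (cos_sqrt q * cos_sqrt' q + sinc_sqrt q ^ 2 / 2 + q * sinc_sqrt q * sinc_sqrt' q)).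
  { unfold q'. field. }
  rewrite cos_sqrt_sinc_sqrt_orth by apply q_nonneg. ring.
Qed.

Lemma sphere_map_speed : cos_sqrt q ^ 2 <= k ^ 2 ->
  t1 ^ 2 + t2 ^ 2 + t3 ^ 2 + t4 ^ 2 <= X' ^ 2 + Y' ^ 2 + k ^ 2 * Z' ^ 2.
Proof.
  intro Hk.
  set (K := cos_sqrt' q ^ 2 + q * sinc_sqrt' q ^ 2 + sinc_sqrt q * sinc_sqrt' q).
  assert (HK := cos_sqrt_sinc_sqrt_speed q q_nonneg). fold K in HK.
  assert (Ht : t1 ^ 2 + t2 ^ 2 + t3 ^ 2 + t4 ^ 2
    = q' ^ 2 * K + cos_sqrt q ^ 2 * Z' ^ 2 + sinc_sqrt q ^ 2 * (X' ^ 2 + Y' ^ 2)).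
  { transitivity ((cos_sqrt' q ^ 2 * q' ^ 2 + cos_sqrt q ^ 2 * Z' ^ 2) * (sin Z ^ 2 + cos Z ^ 2)
      + sinc_sqrt' q ^ 2 * q' ^ 2 * q + sinc_sqrt' q * q' * sinc_sqrt q * q'
      + sinc_sqrt q ^ 2 * (X' ^ 2 + Y' ^ 2)).
    { unfold t1, t2, t3, t4, q, q'. ring. }
    rewrite sin_cos_pow2. unfold K. ring. }
  (* radial and angular parts of the horizontal velocity: [q'^2 <= 4 q |(X', Y')|^2] *)
  assert (Hq' : q' ^ 2 <= 4 * q * (X' ^ 2 + Y' ^ 2))
    by (unfold q', q; pose proof (pow2_ge_0 (X * Y' - Y * X')); nra).
  assert (HS := sinc_sqrt_sqr_le_1 q q_nonneg).
  assert (HXY : 0 <= X' ^ 2 + Y' ^ 2) by nra.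
  assert (Hhor : q' ^ 2 * K + sinc_sqrt q ^ 2 * (X' ^ 2 + Y' ^ 2) <= X' ^ 2 + Y' ^ 2).
  { destruct (Req_dec q 0) as [Hz | Hz].
    - rewrite Hz in Hq', HK. assert (q' ^ 2 = 0) as -> by nra. nra.
    - assert (HK0 : 0 <= K)
        by (apply (Rmult_le_reg_l (4 * q)); [pose proof q_nonneg; lra | nra]).
      assert (q' ^ 2 * K <= 4 * q * (X' ^ 2 + Y' ^ 2) * K) by (apply Rmult_le_compat_r; auto).
      nra. }
  rewrite Ht. pose proof (pow2_ge_0 Z'). nra.
Qed.

End SphereMap.

Lemma is_derive_asin (x : R) : -1 < x < 1 -> is_derive asin x (1 / sqrt (1 - x ^ 2)).
Proof.
  intro H. apply is_derive_Reals.
  pose proof (derive_pt_asin x H) as D.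
  destruct (derivable_pt_asin x H) as [l Hl]. unfold derive_pt in D. simpl in D.
  rewrite <- Rsqr_pow2, <- D. exact Hl.
Qed.

Lemma asin_chain_le (m b b' T : R) : 1 < m -> 0 <= 1 - b ^ 2 -> 0 <= T ->
  b' ^ 2 <= (1 - b ^ 2) * T -> b' / m * (1 / sqrt (1 - (b / m) ^ 2)) <= sqrt T.
Proof.
  intros Hm Hb HT Hb'.
  assert (Hw2 : 0 < 1 - (b / m) ^ 2).
  { replace ((b / m) ^ 2) with (b ^ 2 / m ^ 2) by (field; lra).
    apply (Rmult_lt_reg_r (m ^ 2)); [nra |]. field_simplify; nra. }
  set (w := sqrt (1 - (b / m) ^ 2)).
  assert (Hw : 0 < w) by (apply sqrt_lt_R0; auto).
  assert (Hww : w * w = 1 - (b / m) ^ 2) by (apply sqrt_sqrt; lra).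
  replace (b' / m * (1 / w)) with (b' / (m * w)) by (field; lra).
  apply (Rmult_le_reg_r (m * w)); [nra |].
  unfold Rdiv. rewrite Rmult_assoc, Rinv_l, Rmult_1_r by nra.
  assert (HsT : sqrt T * sqrt T = T) by (apply sqrt_sqrt; auto).
  pose proof (sqrt_pos T).
  assert (b' * b' <= (m * w * sqrt T) * (m * w * sqrt T)).
  { replace ((m * w * sqrt T) * (m * w * sqrt T)) with (m ^ 2 * (w * w) * (sqrt T * sqrt T)) by ring.
    rewrite Hww, HsT. replace (m ^ 2 * (1 - (b / m) ^ 2)) with (m ^ 2 - b ^ 2) by (field; lra).
    assert ((1 - b ^ 2) * T <= (m ^ 2 - b ^ 2) * T) by (apply Rmult_le_compat_r; nra). nra. }
  assert (0 <= m * w * sqrt T) by (apply Rmult_le_pos; nra).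
  nra.
Qed.

Lemma asin_div_derive_le (f : R -> R) (u l m T : R) : 1 < m -> 0 <= 1 - f u ^ 2 -> 0 <= T ->
  is_derive f u l -> l ^ 2 <= (1 - f u ^ 2) * T ->
  ex_derive (fun v => asin (f v / m)) u /\ Derive (fun v => asin (f v / m)) u <= sqrt T.
Proof.
  intros Hm Hb HT Hf Hl.
  assert (Hbm : -1 < f u / m < 1).
  { assert (-1 <= f u <= 1) by (split; nra).
    split; apply (Rmult_lt_reg_r m); try lra; unfold Rdiv; rewrite Rmult_assoc, Rinv_l; lra. }
  assert (HP : is_derive (fun v => asin (f v / m)) u (l / m * (1 / sqrt (1 - (f u / m) ^ 2)))).
  { apply (is_derive_comp asin (fun v => f v / m)); [apply is_derive_asin, Hbm |].
    apply (is_derive_ext (fun v => / m * f v)); [intro; unfold Rdiv; apply Rmult_comm |].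
    replace (l / m) with (/ m * l) by (unfold Rdiv; ring). apply (is_derive_scal _ _ _ _ Hf). }
  split; [eexists; exact HP |].
  replace (Derive (fun v : R => asin (f v / m)) u)
    with (l / m * (1 / sqrt (1 - (f u / m) ^ 2))) by (symmetry; apply is_derive_unique, HP).
  apply asin_chain_le; auto.
Qed.

Section SphereCalibration.
Variables c1 c2 e1 e2 e3 e4 m : R.

Definition sphere_dot (x y z : R) : R :=
  let q := (x - c1) ^ 2 + (y - c2) ^ 2 in
  e1 * (cos_sqrt q * cos z) + e2 * (cos_sqrt q * sin z)
  + e3 * (sinc_sqrt q * (x - c1)) + e4 * (sinc_sqrt q * (y - c2)).

(* For [m = 1] this is the spherical distance from the image of [(x, y, z)] in the
   unit sphere to the great sphere orthogonal to [e]; [m > 1] keeps [asin]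
   differentiable. *)
Definition sphere_angle (x y z : R) : R := asin (sphere_dot x y z / m).

Lemma is_derive_sphere_dot (gx gy gz : R -> R) (u : R) :
  ex_derive gx u -> ex_derive gy u -> ex_derive gz u ->
  let X := gx u - c1 in let Y := gy u - c2 in let Z := gz u in
  let X' := Derive gx u in let Y' := Derive gy u in let Z' := Derive gz u in
  let q := X ^ 2 + Y ^ 2 in let q' := 2 * X * X' + 2 * Y * Y' in
  is_derive (fun v => sphere_dot (gx v) (gy v) (gz v)) u
    (e1 * (cos_sqrt' q * q' * cos Z - cos_sqrt q * sin Z * Z')
     + e2 * (cos_sqrt' q * q' * sin Z + cos_sqrt q * cos Z * Z')
     + e3 * (sinc_sqrt' q * q' * X + sinc_sqrt q * X')
     + e4 * (sinc_sqrt' q * q' * Y + sinc_sqrt q * Y')).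
Proof.
  intros Dx Dy Dz X Y Z X' Y' Z' q q'.
  assert (Hq : 0 <= q) by (unfold q; nra).
  unfold sphere_dot. auto_derive.
  - repeat split; first [exact (ex_intro _ _ (is_derive_cos_sqrt q Hq))
      | exact (ex_intro _ _ (is_derive_sinc_sqrt q Hq)) | auto].
  - change ((gx u + - c1) * ((gx u + - c1) * 1) + (gy u + - c2) * ((gy u + - c2) * 1)) with q.
    change (Derive (fun x => cos_sqrt x)) with (Derive cos_sqrt).
    change (Derive (fun x => sinc_sqrt x)) with (Derive sinc_sqrt).
    rewrite (is_derive_unique _ _ _ (is_derive_cos_sqrt q Hq)),
      (is_derive_unique _ _ _ (is_derive_sinc_sqrt q Hq)).
    change (Derive (fun x => gx x) u) with X'. change (Derive (fun x => gy x) u) with Y'.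
    change (Derive (fun x => gz x) u) with Z'.
    unfold q', X, Y, Z. ring.
Qed.

Hypothesis m_gt_1 : 1 < m.
Hypothesis e_unit : e1 ^ 2 + e2 ^ 2 + e3 ^ 2 + e4 ^ 2 = 1.
Hypothesis center_dist : forall x y, distDelta (PI / 8) x y <= sqrt ((x - c1) ^ 2 + (y - c2) ^ 2).

Lemma sphere_angle_calibrates (gx gy gz : R -> R) : C1 gx -> C1 gy -> C1 gz -> forall u,
  (gx u - c1) ^ 2 + (gy u - c2) ^ 2 <= (3 * PI / 4) ^ 2 ->
  ex_derive (fun v => sphere_angle (gx v) (gy v) (gz v)) u /\
  Derive (fun v => sphere_angle (gx v) (gy v) (gz v)) u <= speed (PI / 8) gx gy gz u.
Proof.
  intros [Dx _] [Dy _] [Dz _] u Hu. pose proof PI_RGT_0.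
  set (X := gx u - c1); set (Y := gy u - c2); set (Z := gz u).
  set (X' := Derive gx u); set (Y' := Derive gy u); set (Z' := Derive gz u).
  set (d := distDelta (PI / 8) (gx u) (gy u)).
  assert (Hsq : sqrt (X ^ 2 + Y ^ 2) <= 3 * PI / 4)
    by (rewrite <- (sqrt_pow2 (3 * PI / 4)) by lra; apply sqrt_le_1_alt, Hu).
  assert (Hd : 0 <= d <= PI / 4).
  { split; [apply distDelta_nonneg |].
    pose proof (distDelta_le_2a (PI / 8) ltac:(lra) (gx u) (gy u)). unfold d; lra. }
  pose proof (sphere_map_speed X Y Z X' Y' Z' (cos d)
    ltac:(apply cos_sqrt_sqr_le; [nra | lra | lra | apply center_dist | lra])) as Hspeed.
  destruct (unit_dot_orth_bound e1 e2 e3 e4 _ _ _ _ _ _ _ _ e_unit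
    (sphere_map_unit X Y Z) (sphere_map_tangent X Y Z X' Y' Z')) as [Hb Hb'].
  unfold sphere_angle, speed, h_speed2. fold X' Y' Z' d.
  eapply (asin_div_derive_le (fun v => sphere_dot (gx v) (gy v) (gz v))); [exact m_gt_1 | exact Hb | ..].
  - pose proof (pow2_ge_0 X'); pose proof (pow2_ge_0 Y'); pose proof (pow2_ge_0 Z');
      pose proof (pow2_ge_0 (cos d)). nra.
  - apply is_derive_sphere_dot; auto.
  - eapply Rle_trans; [exact Hb' |]. apply Rmult_le_compat_l; [exact Hb | exact Hspeed].
Qed.

End SphereCalibration.

(** * The systole *)

Lemma le_of_forall_lt (c L : R) : 0 < c -> (forall t, 0 < t < c -> t <= L) -> c <= L.
Proof.
  intros Hc H. destruct (Rle_lt_dec c L) as [| HL]; [auto | exfalso].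
  pose proof (H ((Rmax L 0 + c) / 2)).
  pose proof (Rmax_l L 0). pose proof (Rmax_r L 0).
  assert (Rmax L 0 < c) by (unfold Rmax; destruct (Rle_dec L 0); lra).
  assert ((Rmax L 0 + c) / 2 <= L) by (apply H; lra). lra.
Qed.

Section QuarterTurn.
Variables cx cy cz : R -> R.
Variables c1 c2 : R.
Hypothesis curve_pw_smooth : pw_smooth cx cy cz.
Hypothesis center_dist : forall x y, distDelta (PI / 8) x y <= sqrt ((x - c1) ^ 2 + (y - c2) ^ 2).
Hypothesis same_radius :
  (cx 1 - c1) ^ 2 + (cy 1 - c2) ^ 2 = (cx 0 - c1) ^ 2 + (cy 0 - c2) ^ 2.
Hypothesis right_angle : (cx 0 - c1) * (cx 1 - c1) + (cy 0 - c2) * (cy 1 - c2) = 0.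
Hypothesis quarter_lift : cos (cz 1 - cz 0) = 0.

Let r0 := (cx 0 - c1) ^ 2 + (cy 0 - c2) ^ 2.
Let L := h_length (PI / 8) cx cy cz.

Lemma quarter_turn_far : PI ^ 2 / 8 <= r0 -> PI / 2 <= L.
Proof.
  intro Hfar. pose proof PI_RGT_0.
  destruct (horizontal_bound (PI / 8) cx cy cz curve_pw_smooth 0 1) as [_ B]; try lra.
  eapply Rle_trans; [| exact B].
  assert (E : (cx 1 - cx 0) ^ 2 + (cy 1 - cy 0) ^ 2 = 2 * r0).
  { transitivity (((cx 1 - c1) ^ 2 + (cy 1 - c2) ^ 2) + r0
      - 2 * ((cx 0 - c1) * (cx 1 - c1) + (cy 0 - c2) * (cy 1 - c2))); [unfold r0; ring |].
    rewrite same_radius, right_angle. unfold r0; ring. }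
  rewrite E, <- (sqrt_pow2 (PI / 2)) by lra. apply sqrt_le_1_alt. lra.
Qed.

Lemma sqrt_lt_PI2 (r : R) : r < PI ^ 2 / 8 -> sqrt r < PI / 2.
Proof.
  intro H. pose proof PI_RGT_0.
  destruct (Rle_lt_dec r 0); [rewrite sqrt_neg_0 by lra; lra |].
  rewrite <- (sqrt_pow2 (PI / 2)) by lra. apply sqrt_lt_1_alt. split; [lra | nra].
Qed.

Lemma quarter_turn_exit (T : R) : r0 < PI ^ 2 / 8 -> 0 <= T <= 1 ->
  (3 * PI / 4) ^ 2 < (cx T - c1) ^ 2 + (cy T - c2) ^ 2 -> PI / 2 <= L.
Proof.
  intros Hnear HT Hout. pose proof PI_RGT_0.
  destruct (horizontal_bound (PI / 8) cx cy cz curve_pw_smooth 0 T) as [E1 B1]; try lra.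
  destruct (horizontal_bound (PI / 8) cx cy cz curve_pw_smooth T 1) as [E2 B2]; try lra.
  assert (HL : L = RInt (speed (PI / 8) cx cy cz) 0 T + RInt (speed (PI / 8) cx cy cz) T 1)
    by (change L with (RInt (speed (PI / 8) cx cy cz) 0 1);
        rewrite <- (RInt_Chasles _ 0 T 1 E1 E2); reflexivity).
  set (sT := sqrt ((cx T - c1) ^ 2 + (cy T - c2) ^ 2)).
  assert (HsT : 3 * PI / 4 < sT).
  { unfold sT. rewrite <- (sqrt_pow2 (3 * PI / 4)) by lra. apply sqrt_lt_1_alt. split; [nra | auto]. }
  pose proof (sqrt_lt_PI2 r0 Hnear) as Hs0.
  pose proof (sqrt_lt_PI2 _ (eq_ind_r (fun r => r < PI ^ 2 / 8) Hnear same_radius)) as Hs1.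
  pose proof (sqrt_sum_sq_triangle (cx T - cx 0) (cy T - cy 0) (cx 0 - c1) (cy 0 - c2)) as T1.
  pose proof (sqrt_sum_sq_triangle (cx T - cx 1) (cy T - cy 1) (cx 1 - c1) (cy 1 - c2)) as T2.
  replace (cx T - cx 0 + (cx 0 - c1)) with (cx T - c1) in T1 by ring.
  replace (cy T - cy 0 + (cy 0 - c2)) with (cy T - c2) in T1 by ring.
  replace (cx T - cx 1 + (cx 1 - c1)) with (cx T - c1) in T2 by ring.
  replace (cy T - cy 1 + (cy 1 - c2)) with (cy T - c2) in T2 by ring.
  replace ((cx T - cx 1) ^ 2 + (cy T - cy 1) ^ 2)
    with ((cx 1 - cx T) ^ 2 + (cy 1 - cy T) ^ 2) in T2 by ring.
  fold sT r0 in T1, T2. lra.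
Qed.

Lemma quarter_turn_sphere :
  (forall u, 0 <= u <= 1 -> (cx u - c1) ^ 2 + (cy u - c2) ^ 2 <= (3 * PI / 4) ^ 2) ->
  forall t, 0 < t < PI / 2 -> t <= L.
Proof.
  intros Hin t Ht.
  set (X1 := cx 1 - c1); set (Y1 := cy 1 - c2); set (q1 := X1 ^ 2 + Y1 ^ 2).
  set (e1 := cos_sqrt q1 * cos (cz 1)); set (e2 := cos_sqrt q1 * sin (cz 1)).
  set (e3 := sinc_sqrt q1 * X1); set (e4 := sinc_sqrt q1 * Y1).
  assert (He : e1 ^ 2 + e2 ^ 2 + e3 ^ 2 + e4 ^ 2 = 1) by apply sphere_map_unit.
  assert (Hsin : 0 < sin t < 1).
  { split; [apply sin_gt_0; lra |]. rewrite <- sin_PI2. apply sin_increasing_1; lra. }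
  set (m := / sin t).
  assert (Hm : 1 < m).
  { unfold m. apply (Rmult_lt_reg_r (sin t)); [lra |]. rewrite Rinv_l; lra. }
  destruct (calibration (PI / 8) cx cy cz (sphere_angle c1 c2 e1 e2 e3 e4 m)
    (fun x y _ => (x - c1) ^ 2 + (y - c2) ^ 2 <= (3 * PI / 4) ^ 2) Hin) with 0 1 as [_ B];
    try lra; auto.
  { intros gx gy gz Cx Cy Cz u Hu. apply sphere_angle_calibrates; auto. }
  assert (Hb1 : sphere_dot c1 c2 e1 e2 e3 e4 (cx 1) (cy 1) (cz 1) = 1).
  { transitivity (e1 ^ 2 + e2 ^ 2 + e3 ^ 2 + e4 ^ 2); [| exact He]. unfold sphere_dot. fold X1 Y1 q1. unfold e1, e2, e3, e4. ring. }
  assert (Hb0 : sphere_dot c1 c2 e1 e2 e3 e4 (cx 0) (cy 0) (cz 0) = 0).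
  { unfold sphere_dot. fold r0. replace r0 with q1 by exact same_radius.
    transitivity (cos_sqrt q1 ^ 2 * (cos (cz 1) * cos (cz 0) + sin (cz 1) * sin (cz 0))
      + sinc_sqrt q1 ^ 2 * ((cx 0 - c1) * X1 + (cy 0 - c2) * Y1)); [unfold e1, e2, e3, e4; ring |].
    rewrite <- cos_minus, quarter_lift. unfold X1, Y1. rewrite right_angle. ring. }
  unfold sphere_angle in B. rewrite Hb1, Hb0 in B.
  replace (0 / m) with 0 in B by (field; lra). rewrite asin_0 in B.
  replace (1 / m) with (sin t) in B by (unfold m; field; lra).
  rewrite asin_sin in B by (split; lra). change L with (RInt (speed (PI / 8) cx cy cz) 0 1). lra.
Qed.

Lemma quarter_turn_length : PI / 2 <= L.
Proof.
  pose proof PI_RGT_0.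
  destruct (Rle_lt_dec (PI ^ 2 / 8) r0) as [Hfar | Hnear]; [apply quarter_turn_far; auto |].
  destruct (Classical_Prop.classic (exists T, 0 <= T <= 1 /\
    (3 * PI / 4) ^ 2 < (cx T - c1) ^ 2 + (cy T - c2) ^ 2)) as [[T [HT Hout]] | Hstay].
  - apply (quarter_turn_exit T); auto.
  - apply le_of_forall_lt; [lra |]. apply quarter_turn_sphere.
    intros u Hu. apply Rnot_lt_le. intro Hout. apply Hstay. exists u. auto.
Qed.

End QuarterTurn.

Lemma translation_length (cx cy cz : R -> R) (i j : Z) : pw_smooth cx cy cz ->
  cx 1 = cx 0 + 4 * (PI / 8) * IZR i -> cy 1 = cy 0 + 4 * (PI / 8) * IZR j ->
  (i <> 0 \/ j <> 0)%Z -> PI / 2 <= h_length (PI / 8) cx cy cz.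
Proof.
  intros Hpw Hx Hy Hij. pose proof PI_RGT_0.
  destruct (horizontal_bound (PI / 8) cx cy cz Hpw 0 1) as [_ B]; try lra.
  eapply Rle_trans; [| exact B]. rewrite Hx, Hy.
  replace (cx 0 + 4 * (PI / 8) * IZR i - cx 0) with (PI / 2 * IZR i) by field.
  replace (cy 0 + 4 * (PI / 8) * IZR j - cy 0) with (PI / 2 * IZR j) by field.
  assert (Hstep : forall k : Z, k <> 0%Z -> PI / 2 <= Rabs (PI / 2 * IZR k)).
  { intros k Hk. rewrite Rabs_mult, (Rabs_right (PI / 2)) by lra.
    assert (1 <= Rabs (IZR k)) by (rewrite <- abs_IZR; apply IZR_le; lia). nra. }
  destruct Hij as [Hi | Hj].
  - eapply Rle_trans; [apply Hstep, Hi | apply Rabs_le_sqrt_sum_sq].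
  - eapply Rle_trans; [apply Hstep, Hj |]. rewrite Rplus_comm. apply Rabs_le_sqrt_sum_sq.
Qed.

Lemma vertical_length (cx cy cz : R -> R) (n : Z) : pw_smooth cx cy cz ->
  cz 1 = cz 0 + IZR n * (PI / 2) -> (2 <= Z.abs n)%Z -> PI / 2 <= h_length (PI / 8) cx cy cz.
Proof.
  intros Hpw Hz Hn. pose proof PI_RGT_0.
  eapply Rle_trans; [| apply vertical_bound, Hpw].
  replace (cz 1 - cz 0) with (IZR n * (PI / 2)) by (rewrite Hz; ring).
  rewrite Rabs_mult, <- abs_IZR, (Rabs_right (PI / 2)) by lra.
  assert (2 <= IZR (Z.abs n)) by (apply IZR_le; lia). nra.
Qed.

Lemma quarter_turn_lattice_length (cx cy cz : R -> R) (I J : Z) (s : R) :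
  pw_smooth cx cy cz -> s ^ 2 = 1 ->
  cx 1 - 2 * (PI / 8) * IZR I = - s * (cy 0 - 2 * (PI / 8) * IZR J) ->
  cy 1 - 2 * (PI / 8) * IZR J = s * (cx 0 - 2 * (PI / 8) * IZR I) ->
  cos (cz 1 - cz 0) = 0 -> PI / 2 <= h_length (PI / 8) cx cy cz.
Proof.
  intros Hpw Hs Hx Hy Hz.
  apply (quarter_turn_length cx cy cz (2 * (PI / 8) * IZR I) (2 * (PI / 8) * IZR J)); auto.
  - intros x y. apply distDelta_le.
  - rewrite Hx, Hy. transitivity (s ^ 2 * ((cx 0 - 2 * (PI / 8) * IZR I) ^ 2
      + (cy 0 - 2 * (PI / 8) * IZR J) ^ 2)); [ring | rewrite Hs; ring].
  - rewrite Hx, Hy. ring.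
Qed.

Lemma cos_odd_mul_PI2 (k : Z) : cos (IZR (2 * k + 1) * (PI / 2)) = 0.
Proof.
  replace (IZR (2 * k + 1) * (PI / 2)) with (IZR k * PI + PI / 2)
    by (rewrite plus_IZR, mult_IZR; simpl; field).
  rewrite cos_plus, cos_PI2, sin_PI2, (sin_eq_0_1 (IZR k * PI)) by (exists k; reflexivity). ring.
Qed.

Lemma deck_length (cx cy cz : R -> R) (n i j : Z) : pw_smooth cx cy cz ->
  (cx 1, cy 1, cz 1) = deck (PI / 8) n i j (cx 0, cy 0, cz 0) ->
  (n <> 0 \/ i <> 0 \/ j <> 0)%Z -> PI / 2 <= h_length (PI / 8) cx cy cz.
Proof.
  intros Hpw Hend Hnt. unfold deck in Hend. injection Hend as Hx Hy Hz.
  assert (Hlift : cos (cz 1 - cz 0) = cos (IZR n * (PI / 2))) by (rewrite Hz; f_equal; ring).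
  pose proof (Z.div_mod n 4 ltac:(lia)) as Hdm.
  unfold rot_x, rot_y in Hx, Hy.
  destruct (Zmod_4_cases n) as [Hm|[Hm|[Hm|Hm]]]; rewrite Hm in Hx, Hy.
  - destruct (Z.eq_dec n 0) as [-> | Hn0].
    + apply (translation_length cx cy cz i j); auto. lia.
    + apply (vertical_length cx cy cz n); auto. lia.
  - apply (quarter_turn_lattice_length cx cy cz (i - j) (i + j) 1); auto; try ring.
    + rewrite Hx, minus_IZR, plus_IZR. ring.
    + rewrite Hy, minus_IZR, plus_IZR. ring.
    + rewrite Hlift. replace n with (2 * (2 * (n / 4)) + 1)%Z by lia. apply cos_odd_mul_PI2.
  - apply (vertical_length cx cy cz n); auto. lia.
  - apply (quarter_turn_lattice_length cx cy cz (i + j) (j - i) (-1)); auto; try ring.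
    + rewrite Hx, minus_IZR, plus_IZR. ring.
    + rewrite Hy, minus_IZR, plus_IZR. ring.
    + rewrite Hlift. replace n with (2 * (2 * (n / 4) + 1) + 1)%Z by lia. apply cos_odd_mul_PI2.
Qed.

Lemma noncontractible_loop_length (cx cy cz : R -> R) :
  noncontractible_loop (PI / 8) cx cy cz -> PI / 2 <= h_length (PI / 8) cx cy cz.
Proof.
  intros [Hpw [g [Hg [Hid Hend]]]].
  destruct (in_Gamma_deck (PI / 8) g Hg) as [n [i [j Hdeck]]].
  rewrite Hdeck in Hend. apply (deck_length cx cy cz n i j Hpw Hend).
  destruct (Z.eq_dec n 0) as [-> | ]; [| lia].
  destruct (Z.eq_dec i 0) as [-> | ]; [| lia].
  destruct (Z.eq_dec j 0) as [-> | ]; [| lia].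
  exfalso. apply Hid, functional_extensionality. intros [[x y] z].
  rewrite Hdeck. unfold deck, rot_x, rot_y. simpl. apply pt_eq. repeat split; ring.
Qed.

Lemma quarter_turn_loop : exists cx cy cz,
  noncontractible_loop (PI / 8) cx cy cz /\ PI / 2 = h_length (PI / 8) cx cy cz.
Proof.
  pose proof PI_RGT_0.
  assert (D0 : forall u, is_derive (fun _ : R => 0) u 0) by (intro; apply (is_derive_const 0 u)).
  assert (Dz : forall u, is_derive (fun v => v * (PI / 2)) u (PI / 2)) by (intro; auto_derive; [auto | ring]).
  assert (C0 : forall s t, C1_on (fun _ => 0) s t).
  { intros s t. exists (fun _ => 0). split; [auto |]. split; [intro; eexists; apply D0 |].
    intro u. apply (continuous_ext (fun _ => 0)); [| apply continuous_const].
    intro; symmetry; apply is_derive_unique, D0. }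
  assert (Cz : forall s t, C1_on (fun v => v * (PI / 2)) s t).
  { intros s t. exists (fun v => v * (PI / 2)). split; [auto |]. split; [intro; eexists; apply Dz |].
    intro u. apply (continuous_ext (fun _ => PI / 2)); [| apply continuous_const].
    intro; symmetry; apply is_derive_unique, Dz. }
  exists (fun _ => 0), (fun _ => 0), (fun v => v * (PI / 2)). split; [split |].
  - exists 1%nat, INR. simpl. repeat split; try (intros k Hk; replace k with 0%nat by lia; simpl); auto; lra.
  - exists (fun p => tau p). split; [| split].
    + apply (Gamma_step _ (fun p => p) tau); [apply Gamma_id | do 6 right; left; reflexivity].
    + intro Hid. pose proof (f_equal (fun f => f (0, 0, 0)) Hid) as H0. simpl in H0.
      injection H0. lra.
    + simpl. apply pt_eq. repeat split; ring.
  - unfold h_length. rewrite (RInt_ext _ (fun _ => PI / 2)); [rewrite RInt_const_R; lra |].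
    intros x _.
    replace (Derive (fun _ : R => 0) x) with 0 by (symmetry; apply is_derive_unique, D0).
    replace (Derive (fun v : R => v * (PI / 2)) x) with (PI / 2)
      by (symmetry; apply is_derive_unique, Dz).
    unfold h_speed2. rewrite distDelta_origin, cos_0.
    replace (0 ^ 2 + 0 ^ 2 + 1 ^ 2 * (PI / 2) ^ 2) with ((PI / 2) ^ 2) by ring.
    apply sqrt_pow2. lra.
Qed.

Lemma Sys_eq : Sys (PI / 8) = Finite (PI / 2).
Proof.
  apply is_glb_Rbar_unique. split.
  - intros L [cx [cy [cz [Hloop ->]]]]. apply noncontractible_loop_length, Hloop.
  - intros b Hb. apply Hb, quarter_turn_loop.
Qed.

Theorem mainTheorem7 :
  Sys (PI / 8) = Finite (PI / 2) /\
  (real (Sys (PI / 8))) ^ 3 / Vol (PI / 8) > 1.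
Proof.
  rewrite Sys_eq. split; [reflexivity |]. simpl real.
  pose proof Vol_pos. pose proof Vol_lt_cube.
  apply Rlt_gt, (Rmult_lt_reg_r (Vol (PI / 8))); [lra |].
  unfold Rdiv. rewrite Rmult_assoc, Rinv_l by lra. lra.
Qed.
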